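(* Let $\mathcal{A}$ be a Banach algebra such that $\mathrm{rad}(\mathcal{A})=\mathrm{rann}(\mathcal{A})$ and $\mathcal{A}/\mathrm{rad}(\mathcal{A})$ is commutative, and suppose $\mathcal{A}$ has a right identity. Then the algebra $\mathfrak{C}(\mathcal{A})$ of all centralizing generalized derivations of $\mathcal{A}$ (with composition as product) is isomorphic to $\mathcal{A}/\mathrm{rad}(\mathcal{A})$.
   Context: $\mathrm{rad}(\mathcal{A})$ is the Jacobson radical and $\mathrm{rann}(\mathcal{A})=\{c\in\mathcal{A}: ac=0\ \forall a\in\mathcal{A}\}$. A derivation is a linear map $d$ with $d(ab)=d(a)b+ad(b)$; a generalized derivation is a linear $\delta$ for which there is a derivation $d$ with $\delta(ab)=a\delta(b)+d(a)b$. It is centralizing if $[\delta(a),a]\in Z(\mathcal{A})$ for all $a$, where $Z(\mathcal{A})$ is the center and $[x,y]=xy-yx$. $\mathfrak{C}(\mathcal{A})$ is regarded as a subalgebra of the algebra of bounded linear operators on $\mathcal{A}$. *)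

From HB Require Import structures.
From mathcomp Require Import all_boot all_order all_algebra.
From mathcomp Require Import complex.
From mathcomp Require Import all_classical all_reals all_analysis.
Set Implicit Arguments. Unset Strict Implicit. Unset Printing Implicit Defensive.
Import Order.TTheory GRing.Theory Num.Theory.
Import numFieldNormedType.Exports.
Local Open Scope ring_scope.

Section BanachAlgebra.
Variables (K : numFieldType) (V : completeNormedModType K) (mul : V -> V -> V).

Definition is_banach_algebra : Prop :=
  [/\ forall a b c, mul a (mul b c) = mul (mul a b) c,
      forall k a b c, mul (k *: a + b) c = k *: mul a c + mul b c,
      forall k a b c, mul a (k *: b + c) = k *: mul a b + mul a c
    & forall a b, `|mul a b| <= `|a| * `|b| ].

Definition is_linear_map (f : V -> V) : Prop :=
  forall k x y, f (k *: x + y) = k *: f x + f y.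

Definition is_derivation (d : V -> V) : Prop :=
  is_linear_map d /\ forall a b, d (mul a b) = mul (d a) b + mul a (d b).

Definition is_gen_derivation (delta : V -> V) : Prop :=
  is_linear_map delta /\
  exists d, is_derivation d /\
    forall a b, delta (mul a b) = mul a (delta b) + mul (d a) b.

Definition center (z : V) : Prop := forall a, mul z a = mul a z.

Definition commutator (x y : V) : V := mul x y - mul y x.

Definition is_centralizing (delta : V -> V) : Prop :=
  forall a, center (commutator (delta a) a).

Definition is_bounded_operator (f : V -> V) : Prop :=
  is_linear_map f /\ continuous f.

Definition frakC (delta : V -> V) : Prop :=
  is_bounded_operator delta /\ is_gen_derivation delta /\ is_centralizing delta.

Definition rann (c : V) : Prop := forall a, mul a c = 0.

(* Jacobson radical (non-unital setting): a in rad(A) iff every b a is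
   left quasi-invertible, i.e. there is c with c + ba - c(ba) = 0. *)
Definition left_quasi_invertible (x : V) : Prop :=
  exists c, c + x - mul c x = 0.

Definition jacobson_rad (a : V) : Prop :=
  forall b, left_quasi_invertible (mul b a).

Definition has_right_identity : Prop := exists e, forall a, mul a e = a.

Definition quotient_rad_commutative : Prop :=
  forall a b, jacobson_rad (mul a b - mul b a).

(* An algebra isomorphism A/rad(A) -> frakC(A), presented through a map
   Psi : A -> B(A) that is constant on cosets of rad(A) and injective on
   A/rad(A) (Psi a = Psi b <-> a - b in rad(A)), linear, multiplicative for
   composition, with image exactly frakC(A). *)
Definition quotient_rad_iso_frakC (Psi : V -> (V -> V)) : Prop :=
  [/\ forall a b, Psi a = Psi b <-> jacobson_rad (a - b),
      forall k a b, Psi (k *: a + b) = (fun x => k *: Psi a x + Psi b x),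
      forall a b, Psi (mul a b) = (Psi a \o Psi b)
    & forall delta, frakC delta <-> exists a, Psi a = delta ].

End BanachAlgebra.

(* Since rad = rann and A/rad is commutative, y(pq) = y(qp) for all y, p, q.
   Hence a |-> R_a, R_a x = xa, is linear and multiplicative, its kernel is
   rann = rad, and every R_a is a bounded centralizing generalized derivation
   (with zero derivation).  Conversely, if delta(ab) = a delta(b) + d(a) b and
   e is a right identity, then delta = R_(delta e) + d with d bounded.  For
   S = R_x and D = d the commutator [D, S] = R_(d x) commutes with S, so the
   Kleinecke-Shirokov identity ad_S^n (D^n) = n! [D, S]^n gives
   ||y (d x)^n|| <= (2 ||x|| ||d||)^n ||y|| / n!.  A Neumann series then makes
   every b (d x) left quasi-invertible: d x lies in rad = rann.  Finally the
   centralizing condition makes d x commute with x, which forces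
   e (d x) = d x, hence d x = 0. *)

From HB Require Import structures.
From mathcomp Require Import all_boot all_order all_algebra.
From mathcomp Require Import complex.
From mathcomp Require Import all_classical all_reals all_analysis.
From mathcomp Require Import ring.
(* Imported last: the analysis library also defines a [center]. *)
Set Implicit Arguments. Unset Strict Implicit. Unset Printing Implicit Defensive.
Import Order.TTheory GRing.Theory Num.Theory.
Import numFieldNormedType.Exports.
Local Open Scope ring_scope.
Local Open Scope complex_scope.

Section AdditiveEndomorphisms.
Variable W : zmodType.

Record endo := Endo {
  endo_fun :> W -> W;
  endoB : forall x y, endo_fun (x - y) = endo_fun x - endo_fun y }.

Lemma endoP (f g : endo) : f =1 g -> f = g.
Proof.
case: f g => f fB [g gB] /= /funext fg; subst g.
by congr Endo; exact: Prop_irrelevance.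
Qed.

HB.instance Definition _ := gen_eqMixin endo.
HB.instance Definition _ := gen_choiceMixin endo.

Lemma endoD (f : endo) x y : f (x + y) = f x + f y.
Proof.
have f0 : f 0 = 0 by have := endoB f 0 0; rewrite !subrr.
have fN z : f (- z) = - f z by have := endoB f 0 z; rewrite f0 !sub0r.
by have := endoB f x (- y); rewrite fN !opprK.
Qed.

Fact endo0B (x y : W) : 0 = 0 - 0 :> W. Proof. by rewrite subrr. Qed.
Definition endo0 := @Endo (fun _ => 0) endo0B.

Fact endo_addB (f g : endo) x y : f (x - y) + g (x - y) = f x + g x - (f y + g y).
Proof. by rewrite !endoB opprD addrACA. Qed.
Definition endo_add (f g : endo) := Endo (endo_addB f g).

Fact endo_oppB (f : endo) x y : - f (x - y) = - f x - - f y.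
Proof. by rewrite endoB opprB addrC opprK. Qed.
Definition endo_opp (f : endo) := Endo (endo_oppB f).

Definition endo1 := @Endo id (fun _ _ => erefl).

Fact endo_mulB (f g : endo) x y : f (g (x - y)) = f (g x) - f (g y).
Proof. by rewrite !endoB. Qed.
Definition endo_mul (f g : endo) := Endo (endo_mulB f g).

Fact endo_addA : associative endo_add.
Proof. by move=> f g h; apply: endoP => x /=; rewrite addrA. Qed.
Fact endo_addC : commutative endo_add.
Proof. by move=> f g; apply: endoP => x /=; rewrite addrC. Qed.
Fact endo_add0 : left_id endo0 endo_add.
Proof. by move=> f; apply: endoP => x /=; rewrite add0r. Qed.
Fact endo_addN : left_inverse endo0 endo_opp endo_add.
Proof. by move=> f; apply: endoP => x /=; rewrite addNr. Qed.
HB.instance Definition _ :=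
  GRing.isZmodule.Build endo endo_addA endo_addC endo_add0 endo_addN.

Fact endo_mulA : associative endo_mul. Proof. by move=> f g h; apply: endoP. Qed.
Fact endo_mul1 : left_id endo1 endo_mul. Proof. by move=> f; apply: endoP. Qed.
Fact endo_mulr1 : right_id endo1 endo_mul. Proof. by move=> f; apply: endoP. Qed.
Fact endo_mulDl : left_distributive endo_mul +%R.
Proof. by move=> f g h; apply: endoP. Qed.
Fact endo_mulDr : right_distributive endo_mul +%R.
Proof. by move=> f g h; apply: endoP => x /=; rewrite endoD. Qed.
HB.instance Definition _ := GRing.Zmodule_isPzRing.Build endo
  endo_mulA endo_mul1 endo_mulr1 endo_mulDl endo_mulDr.

Lemma endo_mulE (f g : endo) x : (f * g) x = f (g x). Proof. by []. Qed.
Lemma endo_subE (f g : endo) x : (f - g) x = f x - g x. Proof. by []. Qed.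

Lemma endo_natmulE (f : endo) n x : (f *+ n) x = f x *+ n.
Proof. by elim: n => [|n IH]; rewrite ?mulr0n // !mulrS -IH. Qed.

Lemma endo_expE (f : endo) n x : (f ^+ n) x = iter n f x.
Proof. by elim: n => [|n IH]; rewrite ?expr0 // exprS endo_mulE IH. Qed.

End AdditiveEndomorphisms.

Section KleineckeShirokov.
Variables (Rg : pzRingType) (S : Rg).

Definition ad (T : Rg) := T * S - S * T.

Lemma adD T U : ad (T + U) = ad T + ad U.
Proof. by rewrite /ad mulrDl mulrDr opprD addrACA. Qed.

Lemma adMn T k : ad (T *+ k) = ad T *+ k.
Proof.
elim: k => [|k IH]; first by rewrite /ad !mulr0n mul0r mulr0 subrr.
by rewrite !mulrS adD IH.
Qed.

Lemma adM T U : ad (T * U) = ad T * U + T * ad U.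
Proof. by rewrite /ad mulrBl mulrBr !mulrA [RHS]addrC addrA subrK. Qed.

Lemma ad_iter0 m : iter m ad 0 = 0.
Proof. by elim: m => //= m ->; rewrite /ad mul0r mulr0 subrr. Qed.

Variable D : Rg.
Hypothesis ad_adD : ad (ad D) = 0.

Lemma ad_iter_mulD m U :
  iter m.+1 ad (D * U) = D * iter m.+1 ad U + (ad D * iter m ad U) *+ m.+1.
Proof.
elim: m => [|m IH]; first by rewrite /= adM addrC.
rewrite iterS IH adD adMn !adM ad_adD mul0r add0r.
by rewrite -!iterS [in RHS]mulrS [RHS]addrCA addrA.
Qed.

Lemma ad_iter_expr n m : (n <= m)%N ->
  iter m ad (D ^+ n) = (ad D ^+ n *+ n`!) *+ (m == n).
Proof.
elim: n m => [|n IH] [|m] lenm //.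
  by rewrite expr0 iterSr {2}/ad mul1r mulr1 subrr ad_iter0 mulr0n.
rewrite exprS ad_iter_mulD (IH m.+1 (leqW lenm)) (IH m lenm) gtn_eqF //.
rewrite mulr0n mulr0 add0r eqSS.
have [->|_] := eqVneq m n; last by rewrite !mulr0n mulr0 mul0rn.
by rewrite !mulr1n mulrnAr -mulrnA -exprS factS mulnC.
Qed.

Lemma kleinecke_shirokov n : iter n ad (D ^+ n) = ad D ^+ n *+ n`!.
Proof. by rewrite ad_iter_expr // eqxx mulr1n. Qed.

End KleineckeShirokov.

Section LinearMaps.
Variables (K : numFieldType) (V : completeNormedModType K).

Definition linear_fun (f : V -> V) of is_linear_map f := f.
HB.instance Definition _ (f : V -> V) (lf : is_linear_map f) :=
  GRing.isLinear.Build K V V *:%R (linear_fun lf) lf.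

Section Laws.
Variables (f : V -> V) (lf : is_linear_map f).

Lemma linear_map0 : f 0 = 0. Proof. exact: raddf0 (linear_fun lf). Qed.
Lemma linear_mapD x y : f (x + y) = f x + f y.
Proof. exact: raddfD (linear_fun lf) x y. Qed.
Lemma linear_mapB x y : f (x - y) = f x - f y.
Proof. exact: raddfB (linear_fun lf) x y. Qed.

Lemma continuous_linear_map_bounded : continuous f ->
  exists M : K, 0 <= M /\ forall y, `|f y| <= M * `|y|.
Proof.
move=> /(_ 0)/(@continuous_linear_bounded _ V V 0 (linear_fun lf)).
move/linear_boundedP => [M [Mr HM]].
exists (`|M| + 1); split; first by rewrite addr_ge0.
by apply: HM; rewrite (le_lt_trans (real_ler_norm Mr)) // ltrDl ltr01.
Qed.

Lemma bounded_linear_map_continuous (c : K) : 0 <= c ->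
  (forall y, `|f y| <= c * `|y|) -> continuous f.
Proof.
move=> c0 fc; apply: (@bounded_linear_continuous _ V V (linear_fun lf)).
apply/linear_boundedP; exists c; split; first exact: ger0_real.
by move=> r /ltW cr y; rewrite (le_trans (fc y)) // ler_wpM2r.
Qed.
End Laws.
End LinearMaps.

Section BanachAlgebraLaws.
Variables (K : numFieldType) (V : completeNormedModType K) (mul : V -> V -> V).
Hypothesis mulV : is_banach_algebra mul.

Lemma bmulA a b c : mul a (mul b c) = mul (mul a b) c.
Proof. by case: mulV. Qed.

Lemma bmul_norm a b : `|mul a b| <= `|a| * `|b|.
Proof. by case: mulV. Qed.

Lemma is_linear_rmul a : is_linear_map (mul^~ a).
Proof. by case: mulV => _ mulDZl _ _ k x y; apply: mulDZl. Qed.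

Lemma is_linear_lmul a : is_linear_map (mul a).
Proof. by case: mulV => _ _ mulDZr _ k x y; apply: mulDZr. Qed.

Lemma bmul0l a : mul 0 a = 0. Proof. exact: linear_map0 (is_linear_rmul a). Qed.
Lemma bmul0r a : mul a 0 = 0. Proof. exact: linear_map0 (is_linear_lmul a). Qed.
Lemma bmulDl a b c : mul (a + b) c = mul a c + mul b c.
Proof. exact: (linear_mapD (is_linear_rmul c) a b). Qed.
Lemma bmulDr a b c : mul a (b + c) = mul a b + mul a c.
Proof. exact: (linear_mapD (is_linear_lmul a) b c). Qed.
Lemma bmulBl a b c : mul (a - b) c = mul a c - mul b c.
Proof. exact: (linear_mapB (is_linear_rmul c) a b). Qed.
Lemma bmulBr a b c : mul a (b - c) = mul a b - mul a c.
Proof. exact: (linear_mapB (is_linear_lmul a) b c). Qed.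

Lemma continuous_rmul a : continuous (mul^~ a).
Proof.
apply: (bounded_linear_map_continuous (is_linear_rmul a) (normr_ge0 a)) => y.
by rewrite mulrC bmul_norm.
Qed.

Definition rmul (a : V) : endo V := Endo (fun x y => bmulBl x y a).

(* [right_pow u n] is u^(n+1). *)
Definition right_pow (u : V) n := iter n (mul^~ u) u.

Lemma left_quasi_invertible_series u :
  cvgn (series (right_pow u)) -> left_quasi_invertible mul u.
Proof.
set s := limn (series (right_pow u)) => s_cvg.
have shift n : mul (series (right_pow u) n) u = series (right_pow u) n.+1 - u.
  have s0 : series (right_pow u) 0 = 0 by rewrite /series /= big_geq.
  elim: n => [|n IH]; first by rewrite seriesS s0 bmul0l addr0 subrr.
  by rewrite seriesS bmulDl IH [in RHS]seriesS addrA.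
have su : mul s u = s - u.
  have lim_su := continuous_cvg _ (@continuous_rmul u s) s_cvg.
  have lim_s_u : (mul^~ u \o series (right_pow u) @ \oo --> s - u)%classic.
    rewrite (_ : _ \o _ = fun n => series (right_pow u) n.+1 - u).
      by apply: cvgB; [rewrite cvg_shiftS|exact: cvg_cst].
    by apply: funext => n /=; rewrite shift.
  exact: (cvg_unique (@norm_hausdorff _ V) (lim_su _) lim_s_u).
(* [s u = s - u] makes [- s] a left quasi-inverse of [u]. *)
exists (- s); rewrite -[- s]sub0r bmulBl bmul0l su.
by rewrite !sub0r opprK addrCA addrK subrr.
Qed.

End BanachAlgebraLaws.

Section OperatorBounds.
Variables (K : numFieldType) (V : normedModType K).

Definition op_bound (T : endo V) (c : K) := forall y, `|T y| <= c * `|y|.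

Lemma op_bound_mul T U c c' : 0 <= c ->
  op_bound T c -> op_bound U c' -> op_bound (T * U) (c * c').
Proof.
by move=> c0 Tc Uc y; rewrite -mulrA (le_trans (Tc _)) // ler_wpM2l.
Qed.

Lemma op_bound_sub T U c c' :
  op_bound T c -> op_bound U c' -> op_bound (T - U) (c + c').
Proof.
by move=> Tc Uc y; rewrite (le_trans (ler_normB _ _)) // mulrDl lerD.
Qed.

Lemma op_bound_exp T c n : 0 <= c -> op_bound T c -> op_bound (T ^+ n) (c ^+ n).
Proof.
move=> c0 Tc; elim: n => [|n IH]; first by move=> y; rewrite !expr0 mul1r.
by rewrite !exprS; apply: op_bound_mul.
Qed.

Lemma op_bound_ad S T s c : 0 <= s -> 0 <= c ->
  op_bound S s -> op_bound T c -> op_bound (ad S T) (2 * s * c).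
Proof.
move=> s0 c0 Ss Tc; have -> : 2 * s * c = c * s + s * c by rewrite mulr2n; ring.
by apply: op_bound_sub; apply: op_bound_mul.
Qed.

Lemma op_bound_iter_ad S T s c n : 0 <= s -> 0 <= c ->
  op_bound S s -> op_bound T c -> op_bound (iter n (ad S) T) ((2 * s) ^+ n * c).
Proof.
move=> s0 c0 Ss Tc; elim: n => [|n IH] /=; first by rewrite expr0 mul1r.
rewrite exprS -!mulrA mulrA; apply: op_bound_ad => //.
by rewrite mulr_ge0 // exprn_ge0 // mulr_ge0.
Qed.

End OperatorBounds.

Lemma complex_archi (R : realType) (z : R[i]) :
  0 <= z -> exists m : nat, z < m%:R.
Proof.
move=> z0; exists (Num.bound (complex.Re z)).
have := z0; rewrite lecE => /andP[_ Re_ge0].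
rewrite -(RRe_real (ger0_real z0)) -(rmorph_nat (real_complex R)) ltcR.
exact: archi_boundP.
Qed.

Section GeometricallyBoundedSeries.
Variables (R : realType) (V : completeNormedModType R[i]).
Variables (v : V ^nat) (A : R[i]).
Hypothesis v_le : forall n, `|v n| * 2 ^+ n <= A.

Let q : R[i] := 2^-1.

Let A_ge0 : 0 <= A.
Proof. by rewrite (le_trans _ (v_le 0)) // expr0 mulr1. Qed.

Lemma geometric_tail_sum i k :
  \sum_(i <= l < i + k) A * q ^+ l + 2 * A * q ^+ (i + k) = 2 * A * q ^+ i.
Proof.
elim: k => [|k IH]; first by rewrite addn0 big_geq // add0r.
rewrite addnS big_nat_recr ?leq_addr //= -addrA -IH; congr (_ + _).
have two_neq0 : (2 : R[i]) != 0 by rewrite pnatr_eq0.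
by rewrite exprS /q; field.
Qed.

Lemma series_tail_le i j : `|\sum_(i <= l < j) v l| <= 2 * A * q ^+ i.
Proof.
have q_ge0 : 0 <= q by rewrite invr_ge0 ler0n.
have [lij|lji] := leqP i j; last first.
  by rewrite big_geq ?normr0 ?mulr_ge0 ?exprn_ge0 // ltnW.
rewrite (le_trans (ler_norm_sum _ _ _)) // -(subnKC lij).
rewrite -(geometric_tail_sum i (j - i)).
rewrite -[X in X <= _]addr0 lerD ?mulr_ge0 ?exprn_ge0 //.
apply: ler_sum => l _; rewrite /q exprVn ler_pdivlMr ?exprn_gt0 //; exact: v_le.
Qed.

Lemma cvg_series_geometric_bound : cvgn (series v).
Proof.
apply/cauchy_cvgP/cauchy_seriesP => e e0.
have [N ltN] : exists N : nat, 2 * A / e < N%:R.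
  by apply: complex_archi; rewrite divr_ge0 ?mulr_ge0 ?A_ge0 ?ltW.
exists ([set k | (N <= k)%N]%classic, [set k | (N <= k)%N]%classic).
  by split; exists N.
move=> [i j] /= [leNi _]; rewrite (le_lt_trans (series_tail_le i j)) //.
rewrite /q exprVn ltr_pdivrMr ?exprn_gt0 //.
move: ltN; rewrite ltr_pdivrMr // => /lt_le_trans; apply.
rewrite mulrC ler_pM2l // -natrX ler_nat ltnW //.
by rewrite (leq_ltn_trans leNi) // ltn_expl.
Qed.

End GeometricallyBoundedSeries.

Lemma leq_expn_fact m n : (m ^ n <= m ^ m * n`!)%N.
Proof.
elim: n => [|n IH]; first by rewrite expn0 fact0 muln1 expn_gt0; case: m.
have [ltnm|lemn] := ltnP n m.
  have m_gt0 : (0 < m)%N by apply: leq_ltn_trans ltnm.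
  by rewrite (@leq_trans (m ^ m)) // ?leq_pexp2l // leq_pmulr // fact_gt0.
by rewrite expnS factS mulnCA leq_mul // leqW.
Qed.

Section CommutativeModuloRadical.
Variables (R : realType) (V : completeNormedModType R[i]) (mul : V -> V -> V).
Hypotheses (mulV : is_banach_algebra mul)
  (rad_rann : forall a, jacobson_rad mul a <-> rann mul a)
  (comm_mod_rad : quotient_rad_commutative mul).

Local Notation R_ := (rmul mulV).

Lemma bmulCr y p q : mul y (mul p q) = mul y (mul q p).
Proof.
apply/eqP; rewrite -subr_eq0 -(bmulBr mulV).
by apply/eqP; apply: (rad_rann _).1 (comm_mod_rad p q) y.
Qed.

Lemma rmulM a b : R_ (mul a b) = R_ a * R_ b.
Proof. by apply: endoP => y /=; rewrite bmulCr (bmulA mulV). Qed.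

Lemma rmulC a b : R_ a * R_ b = R_ b * R_ a.
Proof. by rewrite -!rmulM; apply: endoP => y; apply: bmulCr. Qed.

Lemma op_bound_rmul a : op_bound (R_ a) `|a|.
Proof. by move=> y; rewrite mulrC (bmul_norm mulV). Qed.

Section BoundedDerivation.
Variables (d : V -> V) (d_lin : is_linear_map d).
Hypothesis d_der : forall a b, d (mul a b) = mul (d a) b + mul a (d b).
Variables (M : R[i]) (M_ge0 : 0 <= M) (d_le : forall y, `|d y| <= M * `|y|).

Let D : endo V := Endo (linear_mapB d_lin).

Lemma ad_rmul_derivation x : ad (R_ x) D = R_ (d x).
Proof.
by apply: endoP => y; rewrite endo_subE !endo_mulE /= d_der addrC addKr.
Qed.

Lemma rmul_derivation_exp_le x n w :
  `|(R_ (d x) ^+ n) w| * n`!%:R <= (2 * `|x| * M) ^+ n * `|w|.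
Proof.
have ad_adD : ad (R_ x) (ad (R_ x) D) = 0.
  by rewrite ad_rmul_derivation /ad rmulC subrr.
have := op_bound_iter_ad n (normr_ge0 x) (exprn_ge0 n M_ge0) (op_bound_rmul x)
  (op_bound_exp n M_ge0 (d_le : op_bound D M)) w.
rewrite (kleinecke_shirokov ad_adD) ad_rmul_derivation endo_natmulE normrMn.
by rewrite mulr_natr !exprMn.
Qed.

Lemma derivation_rad x : jacobson_rad mul (d x).
Proof.
move=> b; set u := mul b (d x); set K := 2 * `|x| * M * `|b|.
have [m ltm] : exists m : nat, 2 * K < m%:R.
  by apply: complex_archi; rewrite !mulr_ge0.
apply/(left_quasi_invertible_series mulV).
apply: (cvg_series_geometric_bound (A := m%:R ^+ m * `|u|)) => n.
have -> : right_pow mul u n = (R_ (d x) ^+ n) ((R_ b ^+ n) u).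
  have -> : right_pow mul u n = (R_ u ^+ n) u by rewrite endo_expE.
  by rewrite rmulM rmulC exprMn_comm //; apply: rmulC.
have fact_gt0 : (0 : R[i]) < n`!%:R by rewrite ltr0n fact_gt0.
rewrite -(ler_pM2r fact_gt0) mulrAC.
have le1 := rmul_derivation_exp_le x n ((R_ b ^+ n) u).
have le2 := op_bound_exp n (normr_ge0 b) (op_bound_rmul b) u.
have le3 : (2 * K) ^+ n <= m%:R ^+ n.
  by apply: lerXn2r; rewrite ?ltW // nnegrE ?mulr_ge0.
have le4 : (m%:R ^+ n : R[i]) <= m%:R ^+ m * n`!%:R.
  by rewrite -!natrX -natrM ler_nat leq_expn_fact.
rewrite (le_trans (ler_wpM2r _ le1)) ?exprn_ge0 //.
rewrite (le_trans (ler_wpM2r _ (ler_wpM2l _ le2))) ?exprn_ge0 ?mulr_ge0 //.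
have -> : (2 * `|x| * M) ^+ n * (`|b| ^+ n * `|u|) * 2 ^+ n =
          (2 * K) ^+ n * `|u|.
  by rewrite /K !exprMn; ring.
rewrite (le_trans (ler_wpM2r _ le3)) //.
by rewrite (le_trans (ler_wpM2r _ le4)) // mulrAC.
Qed.

End BoundedDerivation.

Lemma rmul_frakC a : frakC mul (mul^~ a).
Proof.
have rmul_lin := is_linear_rmul mulV a.
split; first by split; [exact: rmul_lin | exact: continuous_rmul].
split.
  split=> //; exists (fun _ => 0); split.
    split=> [k y z|y z]; first by rewrite scaler0 addr0.
    by rewrite (bmul0l mulV) (bmul0r mulV) addr0.
  by move=> y z; rewrite (bmul0l mulV) addr0 (bmulA mulV).
move=> x y; rewrite /commutator -(bmulA mulV) bmulCr subrr.
by rewrite (bmul0l mulV) (bmul0r mulV).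
Qed.

Section RightIdentity.
Variables (e : V) (mul_e : forall a, mul a e = a).

Lemma central_commutator_eq0 p q :
  center mul (commutator mul p q) -> commutator mul p q = 0.
Proof.
by move=> /(_ e); rewrite mul_e => ->; rewrite (bmulBr mulV) bmulCr subrr.
Qed.

Lemma derivation_commute_left_id (d : V -> V) : is_linear_map d ->
  (forall a b, d (mul a b) = mul (d a) b + mul a (d b)) ->
  (forall x, mul (d x) x = mul x (d x)) -> forall x, mul e (d x) = d x.
Proof.
move=> d_lin d_der d_comm x.
have d_e : d e = 0.
  have mul_de y : mul y (d e) = 0.
    have /eqP := d_der y e; rewrite !mul_e -subr_eq0 opprD addrA subrr sub0r.
    by rewrite oppr_eq0 => /eqP.
  by rewrite -[d e]mul_e d_comm mul_de.
have := d_comm (x + e); rewrite (linear_mapD d_lin) d_e addr0.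
by rewrite (bmulDr mulV) (bmulDl mulV) mul_e d_comm => /addrI/esym.
Qed.

Lemma frakC_rmul delta : frakC mul delta -> delta = mul^~ (delta e).
Proof.
move=> [[delta_lin delta_cont] [[_ [d [[d_lin d_der] delta_der]]] delta_cent]].
have deltaE x : delta x = mul x (delta e) + d x.
  by rewrite -{1}[x]mul_e delta_der mul_e.
have [M [M_ge0 delta_le]] := continuous_linear_map_bounded delta_lin delta_cont.
have d_le y : `|d y| <= (M + `|delta e|) * `|y|.
  have -> : d y = delta y - mul y (delta e) by rewrite deltaE addrC addKr.
  by rewrite (le_trans (ler_normB _ _)) // mulrDl lerD // mulrC (bmul_norm mulV).
have d_comm x : mul (d x) x = mul x (d x).
  have /eqP := central_commutator_eq0 (delta_cent x).
  rewrite subr_eq0 deltaE (bmulDl mulV) (bmulDr mulV) => /eqP.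
  by rewrite -(bmulA mulV) bmulCr (bmulA mulV) => /addrI.
have d_rad x := derivation_rad d_lin d_der (addr_ge0 M_ge0 (normr_ge0 _)) d_le x.
apply: funext => x; rewrite deltaE.
rewrite -(derivation_commute_left_id d_lin d_der d_comm).
by rewrite ((rad_rann _).1 (d_rad x)) addr0.
Qed.

End RightIdentity.
End CommutativeModuloRadical.

Theorem theorem4p9 (R : realType) (V : completeNormedModType R[i])
  (mul : V -> V -> V) :
  is_banach_algebra mul ->
  (forall a, jacobson_rad mul a <-> rann mul a) ->
  quotient_rad_commutative mul ->
  has_right_identity mul ->
  exists Psi : V -> (V -> V), quotient_rad_iso_frakC mul Psi.
Proof.
move=> mulV rad_rann comm_mod_rad [e mul_e].
exists (fun a x => mul x a); split.
- move=> a b; rewrite rad_rann; split=> [ab y | ab_rann].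
    by rewrite (bmulBr mulV) (congr1 (@^~ y) ab) subrr.
  by apply: funext => y; apply/eqP; rewrite -subr_eq0 -(bmulBr mulV) ab_rann.
- by move=> k a b; apply: funext => x; apply: (is_linear_lmul mulV).
- move=> a b; apply: funext => x /=.
  by rewrite (bmulCr mulV rad_rann comm_mod_rad) (bmulA mulV).
move=> delta; split=> [|[a <-]]; last exact: rmul_frakC.
by move=> /(frakC_rmul mulV rad_rann comm_mod_rad mul_e) ->; exists (delta e).
Qed.
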